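(* Let $S=p_1,\ldots,p_n$ have independent entries uniform on $[0,1]$, and let $x=x_1x_2\ldots$ and $y=y_1y_2\ldots$ be two independent traces of $S$. Fix the deletion patterns of both traces, and consider two length-$w$ windows $x_{i},\ldots,x_{i+w-1}$ and $y_j,\ldots,y_{j+w-1}$. Let $q$ be the number of $t\in\{0,\ldots,w-1\}$ such that $x_{i+t}$ and $y_{j+t}$ originate from the same original position $k$ (i.e. both are flips of the same $p_k$), and let $r=w-q$. Then for every $\beta>0$, with probability taken over the randomness of $S$ and the coin flips (but not the deletions), $$\Pr\left[\left|\sum_{t=0}^{w-1}|x_{i+t}-y_{j+t}|-\left(\frac q3+\frac r2\right)\right|\ge\beta\right]\le2\exp\left(\frac{-2\beta^2}{w}\right).$$
   Context: A trace of $S=p_1,\ldots,p_n$ with deletion probability $\delta$: sample independent bits $t_k$ with $\Pr[t_k=1]=p_k$, delete each independently with probability $\delta$, and concatenate the surviving bits; each surviving bit thus originates from a specific original position $k$. *)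

From Stdlib Require Import Reals.
From Coquelicot Require Import Coquelicot.
From mathcomp Require Import all_boot.
From mathcomp Require Import all_algebra.
From mathcomp Require Import Rstruct.

Set Implicit Arguments.
Unset Strict Implicit.
Unset Printing Implicit Defensive.

(* Integral of F over the cube [0,1]^n, where F : (nat -> R) -> R only
   looks at the coordinates p 0, ..., p (n-1). *)
Fixpoint cube_int (n : nat) (F : (nat -> R) -> R) : R :=
  match n with
  | O => F (fun _ => 0%R)
  | S m => RInt (fun u => cube_int m (fun p => F (fun k => if k == m then u else p k))) 0%R 1%R
  end.

Definition b2R (b : bool) : R := if b then 1%R else 0%R.

Definition coin_weight (n : nat) (p : nat -> R) (c : {ffun 'I_n -> bool}) : R :=
  (\prod_(k < n) (if c k then p k else 1 - p k))%R.

(* A deletion pattern is a vector D : {ffun 'I_n -> bool}, D k = true iff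
   position k survives.  [origins D] is the list of original positions
   (0-based) of the surviving bits, in order: the m-th bit of the trace
   originates from position nth 0 (origins D) m. *)
Definition origins (n : nat) (D : {ffun 'I_n -> bool}) : seq nat :=
  [seq nat_of_ord k | k <- enum 'I_n & D k].

Definition trace (n : nat) (c D : {ffun 'I_n -> bool}) : seq bool :=
  [seq c k | k <- enum 'I_n & D k].

Definition same_origin_count (n : nat) (Dx Dy : {ffun 'I_n -> bool}) (i j w : nat) : nat :=
  count (fun t => nth 0%N (origins Dx) (i + t)%N == nth 0%N (origins Dy) (j + t)%N) (iota 0 w).

Definition window_dist (x y : seq bool) (i j w : nat) : R :=
  (\sum_(t < w) Rabs (b2R (nth false x (i + t)%N) - b2R (nth false y (j + t)%N)))%R.

(* Probability, over S uniform on [0,1]^n and the independent coin flips of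
   the two traces (deletion patterns Dx, Dy fixed), of the event E on the two
   traces x, y. *)
Definition trace_prob (n : nat) (Dx Dy : {ffun 'I_n -> bool})
    (E : seq bool -> seq bool -> bool) : R :=
  cube_int n (fun p =>
    (\sum_(cx : {ffun 'I_n -> bool}) \sum_(cy : {ffun 'I_n -> bool})
       coin_weight p cx * coin_weight p cy
       * (if E (trace cx Dx) (trace cy Dy) then 1 else 0))%R).

(** Integrating out S, the two coin flips of one original position are a pair
    of bits with joint law [pair_law] (equal bits with probability 1/3 each,
    since int u^2 = int (1-u)^2 = 1/3 and int u(1-u) = 1/6), independently
    over positions.  So |x_(i+t) - y_(j+t)| is a Bernoulli variable of mean 1/3
    when both bits come from the same position and 1/2 otherwise.  These
    variables need not be independent, as a position may be read at two
    different offsets; but both windows read positions in increasing order, so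
    the largest position read at the last offset is read at no earlier one, and
    averaging over that position alone leaves an exact Bernoulli factor.  By
    induction the moment generating function of the sum factorises, Hoeffding's
    lemma bounds each centred factor by exp (l^2/8), and the two-sided Chernoff
    bound with l = 4 beta / w gives the claim. *)

From Stdlib Require Import Reals Lra Psatz.
From Coquelicot Require Import Coquelicot.
From mathcomp Require Import all_boot all_order all_algebra Rstruct.

Set Implicit Arguments.
Unset Strict Implicit.
Unset Printing Implicit Defensive.

Local Open Scope R_scope.

Lemma exp_le (x y : R) : x <= y -> exp x <= exp y.
Proof.
by case/Rle_lt_or_eq_dec=> [/exp_increasing/Rlt_le | ->] //; exact: Rle_refl.
Qed.

Lemma le_is_derive_nonneg (f df : R -> R) (a b : R) :
  (forall x, is_derive f x (df x)) -> (forall x, a <= x <= b -> 0 <= df x) ->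
  a <= b -> f a <= f b.
Proof.
move=> f_df df_ge0 /Rle_lt_or_eq_dec [a_lt_b|<-]; last exact: Rle_refl.
have [c [a_lt_c [c_lt_b ->]]] := MVT_cor3 f df a b a_lt_b
  (fun x _ _ => proj1 (is_derive_Reals f x (df x)) (f_df x)).
have := df_ge0 c (conj a_lt_c c_lt_b); nra.
Qed.

Lemma convex_ge_at_critical_point (g dg d2g : R -> R) :
  (forall x, is_derive g x (dg x)) -> (forall x, is_derive dg x (d2g x)) ->
  (forall x, 0 <= d2g x) -> dg 0 = 0 -> forall s, g 0 <= g s.
Proof.
move=> g_dg dg_d2g d2g_ge0 dg0 s.
have dg_mono x y : x <= y -> dg x <= dg y.
  by apply: le_is_derive_nonneg => // z _; exact: d2g_ge0.
have [s_ge0|s_lt0] := Rle_or_lt 0 s.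
  apply: le_is_derive_nonneg => // x [x_ge0 _].
  by rewrite -dg0; exact: dg_mono.
suff : - g s <= - g 0 by move=> ?; lra.
apply: (le_is_derive_nonneg (f := fun x => - g x) (df := fun x => - dg x)); last lra.
  by move=> x; apply: is_derive_opp.
move=> x [_ x_le0]; have := dg_mono x 0 x_le0; lra.
Qed.

Lemma hoeffding_bernoulli (p s : R) : 0 <= p <= 1 ->
  (1 - p) * exp (- s * p) + p * exp (s * (1 - p)) <= exp (s ^ 2 / 8).
Proof.
move=> p01.
pose D x := 1 - p + p * exp x.
have D_gt0 x : 0 < D x by have := exp_pos x; rewrite /D; nra.
pose u x := p * exp x / D x.
pose g x := x ^ 2 / 8 + x * p - ln (D x).
have g_dg x : is_derive g x (x / 4 + p - u x).
  have := D_gt0 x; rewrite /g /u /D => ?.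
  by auto_derive; [lra | field; lra].
have dg_d2g x : is_derive (fun x => x / 4 + p - u x) x ((u x - / 2) ^ 2).
  have := D_gt0 x; rewrite /u /D => ?.
  by auto_derive; [lra | field; lra].
have g0 : g 0 = 0.
  by rewrite /g /D exp_0 Rmult_1_r (_ : 1 - p + p = 1) ?ln_1 /=; lra.
have g_ge0 : 0 <= g s.
  rewrite -g0; apply: (convex_ge_at_critical_point g_dg dg_d2g).
    by move=> x; exact: pow2_ge_0.
  by rewrite /u /D exp_0; field; lra.
have -> : (1 - p) * exp (- s * p) + p * exp (s * (1 - p)) = exp (- s * p + ln (D s)).
  rewrite exp_plus exp_ln // /D (_ : s * (1 - p) = - s * p + s); last ring.
  by rewrite exp_plus; ring.
by apply: exp_le; rewrite /g in g_ge0; lra.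
Qed.

Lemma is_RInt_01_of_antiderivative (F f : R -> R) (v : R) :
  (forall x, is_derive F x (f x)) -> (forall x, ex_derive f x) ->
  F 1 - F 0 = v -> is_RInt f 0 1 v.
Proof.
move=> F_f f_der <-; apply: (is_RInt_derive F f) => x _; first exact: F_f.
exact: (ex_derive_continuous (K := R_AbsRing) (V := R_NormedModule)).
Qed.

Definition flip_density (b : bool) (u : R) : R := if b then u else 1 - u.

Lemma is_RInt_flip_density2 (b1 b2 : bool) :
  is_RInt (fun u => flip_density b1 u * flip_density b2 u) 0 1
    (if b1 == b2 then / 3 else / 6).
Proof.
case: b1 b2 => [] [] /=;
  [ apply: (is_RInt_01_of_antiderivative (F := fun u => u ^ 3 / 3))
  | apply: (is_RInt_01_of_antiderivative (F := fun u => u ^ 2 / 2 - u ^ 3 / 3))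
  | apply: (is_RInt_01_of_antiderivative (F := fun u => u ^ 2 / 2 - u ^ 3 / 3))
  | apply: (is_RInt_01_of_antiderivative (F := fun u => - (1 - u) ^ 3 / 3)) ];
  by [move=> x; auto_derive; [|field] | move=> x; auto_derive | field].
Qed.

Lemma chernoff_indicator_le (b s x : R) : 0 <= s ->
  (if Rle_dec b (Rabs x) then 1 else 0) <= exp (- s * b) * (exp (s * x) + exp (- s * x)).
Proof.
move=> s_ge0; rewrite Rmult_plus_distr_l -!exp_plus.
have := exp_pos (- s * b + s * x); have := exp_pos (- s * b + - s * x).
case: (Rle_dec b (Rabs x)) => [b_le_x|_] /= ? ?; last lra.
have [x_ge0|x_lt0] := Rle_or_lt 0 x.
  suff : exp 0 <= exp (- s * b + s * x) by rewrite exp_0; lra.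
  by apply: exp_le; rewrite Rabs_right in b_le_x; nra.
suff : exp 0 <= exp (- s * b + - s * x) by rewrite exp_0; lra.
by apply: exp_le; rewrite Rabs_left in b_le_x; nra.
Qed.

Lemma chernoff_exponent (b W : R) : 0 < W ->
  - (4 * b / W) * b + W / 8 * (4 * b / W) ^ 2 = - 2 * b ^ 2 / W.
Proof. by move=> W_gt0; field; lra. Qed.

From mathcomp Require Import ring lra.
Import Order.TTheory GRing.Theory Num.Theory.
Local Open Scope ring_scope.

Definition pair_law (b1 b2 : bool) : R := if b1 == b2 then 3^-1 else 6^-1.

Lemma pair_law_ge0 b1 b2 : 0 <= pair_law b1 b2.
Proof. by rewrite /pair_law; case: eqP; rewrite invr_ge0 ler0n. Qed.

Lemma sum_pair_law : \sum_(b1 : bool) \sum_(b2 : bool) pair_law b1 b2 = 1.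
Proof. by rewrite !big_bool /pair_law /=; field. Qed.

Lemma is_RInt_pair_law b1 b2 :
  is_RInt (fun u => flip_density b1 u * flip_density b2 u) 0 1 (pair_law b1 b2).
Proof. by have := @is_RInt_flip_density2 b1 b2; rewrite /pair_law !RealsE. Qed.

Lemma is_RInt_sum (I : Type) (r : seq I) (f : I -> R -> R) (v : I -> R) (a b : R) :
  (forall i, is_RInt (f i) a b (v i)) ->
  is_RInt (fun u => \sum_(i <- r) f i u) a b (\sum_(i <- r) v i).
Proof.
move=> f_v; elim: r => [|i r IHr].
  have := @is_RInt_const R_NormedModule a b 0; rewrite scal_zero_r big_nil.
  by apply: is_RInt_ext => u _; rewrite big_nil.
rewrite big_cons; apply: is_RInt_ext (is_RInt_plus _ _ _ _ _ _ (f_v i) IHr) => u _.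
by rewrite big_cons.
Qed.

Lemma cube_int_ext m (F G : (nat -> R) -> R) :
  (forall p, F p = G p) -> cube_int m F = cube_int m G.
Proof.
elim: m F G => [|m IHm] F G FG /=; first exact: FG.
by apply: RInt_ext => u _; apply: IHm.
Qed.

Lemma cube_int_sum_prod (I : finType) (f : I -> nat -> R -> R) (m : nat) (c : I -> R) :
  (forall i k, ex_RInt (f i k) 0 1) ->
  cube_int m (fun p => \sum_i c i * \prod_(k < m) f i k (p k)) =
  \sum_i c i * \prod_(k < m) RInt (f i k) 0 1.
Proof.
move=> f_int; elim: m c => [|m IHm] c /=.
  by apply: eq_bigr => i _; rewrite !big_ord0.
pose c' i := c i * \prod_(k < m) RInt (f i k) 0 1.
transitivity (RInt (fun u => \sum_i c' i * f i m u) 0 1).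
  apply: RInt_ext => u _.
  transitivity (\sum_i (c i * f i m u) * \prod_(k < m) RInt (f i k) 0 1); last first.
    by apply: eq_bigr => i _; rewrite /c'; ring.
  rewrite -IHm; apply: cube_int_ext => p; apply: eq_bigr => i _.
  rewrite big_ord_recr /= eqxx.
  under eq_bigr => k _ do rewrite ltn_eqF //.
  ring.
apply: is_RInt_unique; rewrite /c'.
under eq_bigr do rewrite big_ord_recr /= mulrA.
by apply: is_RInt_sum => i; apply: (is_RInt_scal (f i m)); exact: RInt_correct.
Qed.

Definition ffun_set (n : nat) (c : {ffun 'I_n -> bool}) (k : 'I_n) (b : bool) :
    {ffun 'I_n -> bool} :=
  [ffun l => if l == k then b else c l].

Lemma ffun_set_eq n (c : {ffun 'I_n -> bool}) k b : ffun_set c k b k = b.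
Proof. by rewrite ffunE eqxx. Qed.

Lemma ffun_set_neq n (c : {ffun 'I_n -> bool}) k b l : l != k -> ffun_set c k b l = c l.
Proof. by rewrite ffunE => /negbTE ->. Qed.

Lemma sum_ffun_set n (k : 'I_n) (G : {ffun 'I_n -> bool} -> R) :
  \sum_c G c =
  \sum_(b : bool) \sum_(c : {ffun 'I_n -> bool} | c k == false) G (ffun_set c k b).
Proof.
rewrite (partition_big (fun c : {ffun _ -> _} => c k) xpredT) //=; apply: eq_bigr => b _.
rewrite (reindex_onto (fun c => ffun_set c k b) (fun c => ffun_set c k false)) /=.
  apply: eq_bigl => c; rewrite ffun_set_eq eqxx andTb.
  apply/eqP/eqP => [<-|c_k]; first exact: ffun_set_eq.
  by apply/ffunP => l; rewrite !ffunE; case: eqP => [->|].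
by move=> c /eqP c_k; apply/ffunP => l; rewrite !ffunE; case: eqP => [->|].
Qed.

Definition bernoulli_mean (p : R) (f : bool -> R) : R := ((1 - p) * f false + p * f true)%R.

Lemma exp_sum (I : Type) (r : seq I) (P : pred I) (F : I -> R) :
  exp (\sum_(i <- r | P i) F i) = \prod_(i <- r | P i) exp (F i).
Proof. exact: (big_morph _ exp_plus exp_0). Qed.

Lemma bernoulli_mean_ge0 (p : R) (f : bool -> R) :
  0 <= p <= 1 -> (forall b, 0 <= f b) -> 0 <= bernoulli_mean p f.
Proof.
by case/andP=> p_ge0 p_le1 f_ge0; rewrite addr_ge0 ?mulr_ge0 ?subr_ge0.
Qed.

Lemma bernoulli_mean_exp_centered (p l : R) : 0 <= p <= 1 ->
  bernoulli_mean p (fun b => exp (l * (b2R b - p))) <= exp (l ^+ 2 / 8).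
Proof.
case/andP=> /RleP p_ge0 /RleP p_le1.
have /RleP := hoeffding_bernoulli l (conj p_ge0 p_le1); rewrite !RealsE.
by rewrite /bernoulli_mean /b2R /= !RealsE sub0r mulrN -mulNr.
Qed.

Section CoinPairs.
Variable n : nat.
Local Notation coins := {ffun 'I_n -> bool}.

Definition coins_law (cx cy : coins) : R := \prod_(k < n) pair_law (cx k) (cy k).

Definition expect (F : coins -> coins -> R) : R :=
  \sum_(cx : coins) \sum_(cy : coins) coins_law cx cy * F cx cy.

Lemma eq_expect F G : F =2 G -> expect F = expect G.
Proof. by move=> FG; apply: eq_bigr => cx _; apply: eq_bigr => cy _; rewrite FG. Qed.

Lemma expect_le F G : (forall cx cy, F cx cy <= G cx cy) -> expect F <= expect G.
Proof.
move=> FG; apply: ler_sum => cx _; apply: ler_sum => cy _.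
by apply: ler_wpM2l => //; apply: prodr_ge0 => k _; exact: pair_law_ge0.
Qed.

Lemma expectD F G : expect (fun cx cy => F cx cy + G cx cy) = expect F + expect G.
Proof.
rewrite /expect -big_split; apply: eq_bigr => cx _.
by rewrite -big_split; apply: eq_bigr => cy _; rewrite mulrDr.
Qed.

Lemma expectZ a F : expect (fun cx cy => a * F cx cy) = a * expect F.
Proof.
rewrite /expect mulr_sumr; apply: eq_bigr => cx _.
by rewrite mulr_sumr; apply: eq_bigr => cy _; rewrite mulrCA.
Qed.

Lemma expect1 : expect (fun _ _ => 1) = 1.
Proof.
transitivity (\prod_(k < n) \sum_(b1 : bool) \sum_(b2 : bool) pair_law b1 b2).
  rewrite bigA_distr_bigA /=; apply: eq_bigr => cx _.
  by rewrite bigA_distr_bigA /=; apply: eq_bigr => cy _; rewrite mulr1.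
by rewrite big1 // => k _; exact: sum_pair_law.
Qed.

Lemma expect_at_coordinate (k : 'I_n) F :
  expect F = \sum_(cx : coins | cx k == false) \sum_(cy : coins | cy k == false)
    \prod_(l < n | l != k) pair_law (cx l) (cy l) *
    \sum_(b1 : bool) \sum_(b2 : bool)
      pair_law b1 b2 * F (ffun_set cx k b1) (ffun_set cy k b2).
Proof.
rewrite /expect (sum_ffun_set k) exchange_big /=; apply: eq_bigr => cx _.
under eq_bigr do rewrite (sum_ffun_set k) exchange_big /=.
rewrite exchange_big /=; apply: eq_bigr => cy _.
rewrite mulr_sumr; apply: eq_bigr => b1 _; rewrite mulr_sumr; apply: eq_bigr => b2 _.
rewrite /coins_law (bigD1 k) //= !ffun_set_eq mulrCA -mulrA; congr (_ * (_ * _)).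
by apply: eq_bigr => l l_k; rewrite !ffun_set_neq.
Qed.

Lemma expect_mul_indep (k : 'I_n) (G H : coins -> coins -> R) (m : R) :
  (forall cx cy b1 b2, G (ffun_set cx k b1) (ffun_set cy k b2) = G cx cy) ->
  (forall cx cy, \sum_(b1 : bool) \sum_(b2 : bool)
     pair_law b1 b2 * H (ffun_set cx k b1) (ffun_set cy k b2) = m) ->
  expect (fun cx cy => G cx cy * H cx cy) = m * expect G.
Proof.
move=> G_indep H_mean.
have G_mean cx cy : \sum_(b1 : bool) \sum_(b2 : bool)
    pair_law b1 b2 * G (ffun_set cx k b1) (ffun_set cy k b2) = G cx cy.
  rewrite -[RHS]mulr1 -sum_pair_law mulr_sumr; apply: eq_bigr => b1 _.
  by rewrite mulr_sumr; apply: eq_bigr => b2 _; rewrite G_indep mulrC.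
rewrite !(expect_at_coordinate k) mulr_sumr; apply: eq_bigr => cx _.
rewrite mulr_sumr; apply: eq_bigr => cy _; rewrite G_mean mulrCA; congr (_ * _).
under eq_bigr do under eq_bigr do rewrite G_indep mulrCA.
by rewrite -(H_mean cx cy) mulrC mulr_sumr; under eq_bigr do rewrite -mulr_sumr.
Qed.

Lemma expect_tail_le (X : coins -> coins -> R) (c b s : R) : 0 <= s ->
  (forall l, expect (fun cx cy => exp (l * X cx cy)) <= exp (c * l ^+ 2)) ->
  expect (fun cx cy => if Rle_dec b (Rabs (X cx cy)) then 1 else 0) <=
  2 * exp (- s * b + c * s ^+ 2).
Proof.
move=> /RleP s_ge0 mgf.
apply: le_trans (@expect_le _ (fun cx cy =>
  exp (- s * b) * (exp (s * X cx cy) + exp (- s * X cx cy))) _) _.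
  by move=> cx cy; apply/RleP; exact: chernoff_indicator_le.
rewrite expectZ expectD exp_plus mulrCA.
apply: ler_wpM2l; first exact/RleP/Rlt_le/exp_pos.
have := mgf (- s); rewrite RoppE sqrrN => mgf_neg.
by rewrite mulr_natl mulr2n; apply: lerD.
Qed.

Section Mismatches.
Variables (A B : nat -> 'I_n) (w : nat).
Hypothesis A_incr : forall s t, (s < t)%N -> (t < w)%N -> (A s < A t)%N.
Hypothesis B_incr : forall s t, (s < t)%N -> (t < w)%N -> (B s < B t)%N.

Definition mismatch (t : nat) (cx cy : coins) : bool := cx (A t) != cy (B t).

Definition mismatch_prob (t : nat) : R := if A t == B t then 3^-1 else 2^-1.

Definition last_site (t : nat) : 'I_n := if (A t < B t)%N then B t else A t.

Lemma mismatch_at_last_site t (f : bool -> R) cx cy :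
  \sum_(b1 : bool) \sum_(b2 : bool) pair_law b1 b2 *
    f (mismatch t (ffun_set cx (last_site t) b1) (ffun_set cy (last_site t) b2)) =
  bernoulli_mean (mismatch_prob t) f.
Proof.
rewrite /mismatch /mismatch_prob /last_site /bernoulli_mean !big_bool /=.
case: ltngtP => [AB|BA|/val_inj AB].
- have AB' : A t != B t := negbT (ltn_eqF AB).
  rewrite (negbTE AB') !ffun_set_eq !(ffun_set_neq _ _ AB') /pair_law /=.
  by case: (cx (A t)) => /=; field.
- have BA' : B t != A t := negbT (ltn_eqF BA).
  rewrite [A t == B t]eq_sym (negbTE BA') !ffun_set_eq !(ffun_set_neq _ _ BA') /pair_law /=.
  by case: (cy (B t)) => /=; field.
- by rewrite AB eqxx !ffun_set_eq /pair_law /=; field.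
Qed.

Lemma mismatch_ffun_set t k cx cy b1 b2 : A t != k -> B t != k ->
  mismatch t (ffun_set cx k b1) (ffun_set cy k b2) = mismatch t cx cy.
Proof. by move=> Ak Bk; rewrite /mismatch !ffun_set_neq. Qed.

Lemma ltn_last_site s t : (s < t)%N -> (t < w)%N ->
  (A s < last_site t)%N && (B s < last_site t)%N.
Proof.
move=> st tw; rewrite /last_site; case: (ltnP (A t) (B t)) => [AB|BA].
  by rewrite B_incr // (ltn_trans (A_incr st tw)).
by rewrite A_incr // (leq_trans (B_incr st tw)).
Qed.

Lemma expect_prod_mismatch (f : nat -> bool -> R) v : (v <= w)%N ->
  expect (fun cx cy => \prod_(t < v) f t (mismatch t cx cy)) =
  \prod_(t < v) bernoulli_mean (mismatch_prob t) (f t).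
Proof.
elim: v => [_|v IHv vw].
  by rewrite big_ord0 -[RHS]expect1; apply: eq_expect => cx cy; rewrite big_ord0.
rewrite (@eq_expect _ (fun cx cy => (\prod_(t < v) f t (mismatch t cx cy)) *
                                    f v (mismatch v cx cy))); last first.
  by move=> cx cy; rewrite big_ord_recr.
rewrite (expect_mul_indep (k := last_site v) (m := bernoulli_mean (mismatch_prob v) (f v)))
  => [||cx cy].
- by rewrite big_ord_recr IHv 1?mulrC // ltnW.
- move=> cx cy b1 b2; apply: eq_bigr => t _.
  have /andP[At Bt] := ltn_last_site (ltn_ord t) vw.
  by rewrite (mismatch_ffun_set _ _ _ _ (negbT (ltn_eqF At)) (negbT (ltn_eqF Bt))).
- exact: mismatch_at_last_site.
Qed.

Lemma mismatch_prob_01 t : 0 <= mismatch_prob t <= 1.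
Proof. by rewrite /mismatch_prob; case: eqP => _; lra. Qed.

Lemma expect_exp_mismatch_sum (l : R) :
  expect (fun cx cy => exp (l * (\sum_(t < w) b2R (mismatch t cx cy) -
                                 \sum_(t < w) mismatch_prob t))) <=
  exp (w%:R / 8 * l ^+ 2).
Proof.
rewrite (@eq_expect _ (fun cx cy => \prod_(t < w)
           exp (l * (b2R (mismatch t cx cy) - mismatch_prob t)))); last first.
  by move=> cx cy; rewrite !RealsE -sumrB mulr_sumr exp_sum.
rewrite (expect_prod_mismatch (fun t b => exp (l * (b2R b - mismatch_prob t)))) //.
rewrite !RealsE; have -> : w%:R / 8 * l ^+ 2 = \sum_(t < w) l ^+ 2 / 8.
  by rewrite sumr_const card_ord -[RHS]mulr_natl; field.
rewrite exp_sum; apply: ler_prod => t _; have p01 := mismatch_prob_01 t.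
rewrite bernoulli_mean_ge0 //=; last by move=> b; apply/RleP/Rlt_le/exp_pos.
by have := bernoulli_mean_exp_centered l p01; rewrite !RealsE.
Qed.
End Mismatches.
End CoinPairs.

Section Traces.
Variable n : nat.
Local Notation coins := {ffun 'I_n -> bool}.

(* Positions k >= n, which [cube_int] never integrates over, get density 1. *)
Definition coin_pair_density (cx cy : coins) (k : nat) (u : R) : R :=
  if insub k is Some o then flip_density (cx o) u * flip_density (cy o) u else 1.

Lemma coin_weight_pair (p : nat -> R) (cx cy : coins) :
  coin_weight p cx * coin_weight p cy = \prod_(k < n) coin_pair_density cx cy k (p k).
Proof.
by rewrite -big_split; apply: eq_bigr => k _; rewrite /coin_pair_density valK.
Qed.

Lemma RInt_coin_pair_density (cx cy : coins) (k : 'I_n) :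
  RInt (coin_pair_density cx cy k) 0 1 = pair_law (cx k) (cy k).
Proof.
by apply: is_RInt_unique; rewrite /coin_pair_density valK; exact: is_RInt_pair_law.
Qed.

Lemma ex_RInt_coin_pair_density (cx cy : coins) (k : nat) :
  ex_RInt (coin_pair_density cx cy k) 0 1.
Proof.
rewrite /coin_pair_density; case: insub => [o|]; last exact: ex_RInt_const.
by eexists; exact: is_RInt_pair_law.
Qed.

Lemma trace_prob_expect (Dx Dy : coins) (E : seq bool -> seq bool -> bool) :
  trace_prob Dx Dy E = expect (fun cx cy => if E (trace cx Dx) (trace cy Dy) then 1 else 0).
Proof.
rewrite /trace_prob (@cube_int_ext _ _ (fun p => \sum_(a : coins * coins)
    (if E (trace a.1 Dx) (trace a.2 Dy) then 1 else 0) *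
    \prod_(k < n) coin_pair_density a.1 a.2 k (p k))); last first.
  move=> p; rewrite pair_big /=; apply: eq_bigr => a _.
  by rewrite coin_weight_pair mulrC.
rewrite (cube_int_sum_prod (f := fun a => coin_pair_density a.1 a.2)) => [|a k];
  last exact: ex_RInt_coin_pair_density.
rewrite /expect pair_big /=; apply: eq_bigr => a _; rewrite mulrC; congr (_ * _).
by apply: eq_bigr => k _; rewrite RInt_coin_pair_density.
Qed.

Lemma trace_prob_le1 (Dx Dy : coins) (E : seq bool -> seq bool -> bool) :
  trace_prob Dx Dy E <= 1.
Proof.
rewrite trace_prob_expect -[X in _ <= X](expect1 n).
by apply: expect_le => cx cy; case: ifP; rewrite ?lexx ?ler01.
Qed.

Definition kept (D : coins) : seq 'I_n := [seq k <- enum 'I_n | D k].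

Lemma size_kept (D : coins) : size (kept D) = size (origins D).
Proof. by rewrite size_map. Qed.

Lemma size_origins_le (D : coins) : (size (origins D) <= n)%N.
Proof. by rewrite -size_kept size_filter -[leqRHS]size_enum_ord count_size. Qed.

Lemma kept_ltn_nth (D : coins) (x0 : 'I_n) (s t : nat) :
  (s < t)%N -> (t < size (kept D))%N -> (nth x0 (kept D) s < nth x0 (kept D) t)%N.
Proof.
move=> st t_lt; have lt_trans : transitive (relpre (val : 'I_n -> nat) ltn).
  by move=> a b c /=; exact: ltn_trans.
apply: (sorted_ltn_nth lt_trans x0) => //; rewrite ?inE ?(ltn_trans st) //.
apply: sorted_filter => //; rewrite -sorted_map val_enum_ord; exact: iota_ltn_sorted.
Qed.

Lemma nth_trace (c D : coins) (x0 : 'I_n) m : (m < size (origins D))%N ->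
  nth false (trace c D) m = c (nth x0 (kept D) m).
Proof. by rewrite -size_kept => m_lt; rewrite (nth_map x0). Qed.

Lemma nth_origins (D : coins) (x0 : 'I_n) m : (m < size (origins D))%N ->
  nth 0%N (origins D) m = nth x0 (kept D) m.
Proof. by rewrite -size_kept => m_lt; rewrite (nth_map x0). Qed.
End Traces.

Lemma Rabs_b2R_sub (a b : bool) : Rabs (b2R a - b2R b) = b2R (a != b).
Proof.
rewrite RabsE RminusE /b2R.
by case: a; case: b; rewrite /= ?subrr ?subr0 ?sub0r ?normrN ?normr0 ?normr1.
Qed.

Lemma sum_if_count (T : Type) (s : seq T) (P : pred T) (a b : R) :
  \sum_(t <- s) (if P t then a else b) =
  (count P s)%:R * a + (count (predC P) s)%:R * b.
Proof.
elim: s => [|x s IHs]; first by rewrite big_nil !mul0r addr0.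
by rewrite big_cons IHs /=; case: (P x); rewrite /= !natrD; ring.
Qed.

Section Window.
Variables (n : nat) (Dx Dy : {ffun 'I_n -> bool}) (i j w : nat) (x0 : 'I_n).
Hypotheses (hx : (i + w <= size (origins Dx))%N) (hy : (j + w <= size (origins Dy))%N).

Definition x_site (t : nat) : 'I_n := nth x0 (kept Dx) (i + t).
Definition y_site (t : nat) : 'I_n := nth x0 (kept Dy) (j + t).

Lemma x_in_window t : (t < w)%N -> (i + t < size (origins Dx))%N.
Proof. by move=> tw; apply: leq_trans hx; rewrite ltn_add2l. Qed.

Lemma y_in_window t : (t < w)%N -> (j + t < size (origins Dy))%N.
Proof. by move=> tw; apply: leq_trans hy; rewrite ltn_add2l. Qed.

Lemma x_site_incr s t : (s < t)%N -> (t < w)%N -> (x_site s < x_site t)%N.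
Proof.
by move=> st tw; apply: kept_ltn_nth; rewrite ?ltn_add2l ?size_kept ?x_in_window.
Qed.

Lemma y_site_incr s t : (s < t)%N -> (t < w)%N -> (y_site s < y_site t)%N.
Proof.
by move=> st tw; apply: kept_ltn_nth; rewrite ?ltn_add2l ?size_kept ?y_in_window.
Qed.

Lemma window_dist_traces cx cy :
  window_dist (trace cx Dx) (trace cy Dy) i j w =
  \sum_(t < w) b2R (mismatch x_site y_site t cx cy).
Proof.
apply: eq_bigr => t _; have tw := ltn_ord t.
by rewrite (nth_trace _ x0 (x_in_window tw)) (nth_trace _ x0 (y_in_window tw)) Rabs_b2R_sub.
Qed.

Lemma sum_mismatch_prob :
  let q := same_origin_count Dx Dy i j w in
  \sum_(t < w) mismatch_prob x_site y_site t = INR q / 3 + INR (w - q) / 2.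
Proof.
rewrite /= /same_origin_count; set P := (fun t => _ == _).
have -> : (w - count P (iota 0 w) = count (predC P) (iota 0 w))%N.
  by rewrite -[X in (X - _)%N](size_iota 0 w) -(count_predC P) addKn.
rewrite !RealsE -sum_if_count -(big_mkord xpredT) /=.
rewrite /index_iota subn0; apply: eq_big_seq => t; rewrite mem_iota add0n => /andP[_ tw].
by rewrite /mismatch_prob /P !(nth_origins x0) ?x_in_window ?y_in_window.
Qed.

Lemma trace_prob_window_le (beta s : R) : 0 <= s ->
  trace_prob Dx Dy (fun x y => Rle_dec beta (Rabs (window_dist x y i j w -
    (INR (same_origin_count Dx Dy i j w) / 3 +
     INR (w - same_origin_count Dx Dy i j w) / 2)))) <=
  2 * exp (- s * beta + w%:R / 8 * s ^+ 2).
Proof.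
move=> s_ge0; rewrite trace_prob_expect.
rewrite (@eq_expect _ _ (fun cx cy => if Rle_dec beta
    (Rabs (\sum_(t < w) b2R (mismatch x_site y_site t cx cy) -
           \sum_(t < w) mismatch_prob x_site y_site t)) then 1 else 0)); last first.
  by move=> cx cy; rewrite window_dist_traces sum_mismatch_prob !RealsE.
exact: expect_tail_le s_ge0 (expect_exp_mismatch_sum x_site_incr y_site_incr).
Qed.
End Window.

Local Close Scope ring_scope.

Theorem lemma6 (n : nat) (Dx Dy : {ffun 'I_n -> bool}) (i j w : nat)
  (hx : (i + w <= size (origins Dx))%N) (hy : (j + w <= size (origins Dy))%N)
  (beta : R) (hbeta : Rlt 0 beta) :
  let q := same_origin_count Dx Dy i j w in
  let r := (w - q)%N in
  Rle (trace_prob Dx Dy (fun x y =>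
     Rle_dec beta (Rabs (window_dist x y i j w - (INR q / 3 + INR r / 2)))))
   (2 * exp (- 2 * beta ^ 2 / INR w)).
Proof.
move=> q r.
have [w0|w_gt0] := posnP w.
  (* The bound is then 2, since [/ 0 = 0]. *)
  apply: (Rle_trans _ 1); first exact/RleP/trace_prob_le1.
  by rewrite w0 /= /Rdiv Rinv_0 Rmult_0_r exp_0; apply/RleP; rewrite !RealsE mulr1 ler1n.
have n_gt0 : (0 < n)%N.
  by apply: leq_trans (size_origins_le Dx); apply: leq_trans hx; rewrite addn_gt0 w_gt0 orbT.
pose s := 4 * beta / INR w.
have s_ge0 : (0 <= s)%R.
  move/RltP: hbeta => beta_gt0.
  by rewrite /s !RealsE; apply: divr_ge0; rewrite ?mulr_ge0 ?ler0n ?ltW.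
have := trace_prob_window_le (Ordinal n_gt0) hx hy beta s_ge0 => /RleP.
rewrite -[(w%:R)%R]INRE -[(s ^+ 2)%R]RpowE /s chernoff_exponent; first exact.
by apply: lt_0_INR; apply/ssrnat.ltP.
Qed.
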